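(* Let $A$ be a von Neumann algebra such that $\mathcal V(A)$ satisfies the descending chain condition: every chain $\cdots\subseteq C_3\subseteq C_2\subseteq C_1$ in $\mathcal V(A)$ stabilizes. Then the topological space $\Sigma^\ast$ is sober (every nonempty irreducible closed subset is the closure of a unique point). In particular, $\Sigma^\ast$ is sober whenever $A$ is finite-dimensional.
   Context: Let $A$ be a von Neumann algebra. $\mathcal{V}(A)$ denotes the set of abelian von Neumann subalgebras $C\subseteq A$ containing the unit of $A$, partially ordered by inclusion. For $C\in\mathcal V(A)$, $\Sigma_C$ denotes the Gelfand spectrum of $C$, with restriction maps $\lambda\mapsto\lambda|_D$ for $D\subseteq C$. Let $\Sigma=\{(C,\lambda)\mid C\in\mathcal V(A),\lambda\in\Sigma_C\}$ and $U_C=\{\lambda\mid(C,\lambda)\in U\}$ for $U\subseteq\Sigma$. The space $\Sigma^\ast$ is $\Sigma$ with the topology in which $U$ is open iff (1) each $U_C$ is open in $\Sigma_C$ and (2) $\lambda\in U_C$, $D\subseteq C$ imply $\lambda|_D\in U_D$. *)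

From mathcomp Require Import all_boot all_algebra complex.
From mathcomp Require Import boolp classical_sets reals.
Import GRing.Theory Num.Theory.
Local Open Scope ring_scope.
Local Open Scope classical_set_scope.

Set Implicit Arguments. Unset Strict Implicit. Unset Printing Implicit Defensive.

Section VNA.
Variable R : realType.
Local Notation C := R[i].
Variable V : lmodType C.
Variable ip : V -> V -> C.

Definition is_hilbert : Prop :=
  (forall (a : C) (x y z : V), ip (a *: x + y) z = a * ip x z + ip y z) /\
  (forall x y, ip y x = (ip x y)^*) /\
  (forall x, 0 <= ip x x) /\
  (forall x, ip x x = 0 -> x = 0) /\
  (forall u : nat -> V,
     (forall e : C, 0 < e -> exists N, forall m n, (N <= m)%N -> (N <= n)%N ->
          ip (u m - u n) (u m - u n) < e) ->
     exists x, forall e : C, 0 < e -> exists N, forall n, (N <= n)%N ->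
          ip (u n - x) (u n - x) < e).

Definition bounded_op (T : V -> V) : Prop :=
  (forall (a : C) (x y : V), T (a *: x + y) = a *: T x + T y) /\
  exists M : C, forall x, ip (T x) (T x) <= M * ip x x.

Definition commutant (S : set (V -> V)) : set (V -> V) :=
  [set T | bounded_op T /\ forall S0, S S0 -> T \o S0 = S0 \o T].

Definition is_adjoint (T S : V -> V) : Prop :=
  forall x y, ip (T x) y = ip x (S y).

Definition von_neumann_algebra (A : set (V -> V)) : Prop :=
  (forall T, A T -> bounded_op T) /\
  A id /\
  (forall (a : C) T S, A T -> A S -> A (fun x => a *: T x + S x)) /\
  (forall T S, A T -> A S -> A (T \o S)) /\
  (forall T, A T -> exists2 S, A S & is_adjoint T S) /\
  commutant (commutant A) = A.

Definition VA (A : set (V -> V)) : set (set (V -> V)) :=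
  [set Cc | von_neumann_algebra Cc /\ Cc `<=` A /\
            (forall T S, Cc T -> Cc S -> T \o S = S \o T)].

(* Gelfand spectrum of Cc: nonzero multiplicative linear functionals on Cc,
   represented as functions on all operators that vanish outside Cc. *)
Definition character (Cc : set (V -> V)) (l : (V -> V) -> C) : Prop :=
  (forall (a : C) T S, Cc T -> Cc S -> l (fun x => a *: T x + S x) = a * l T + l S) /\
  (forall T S, Cc T -> Cc S -> l (T \o S) = l T * l S) /\
  (exists T, Cc T /\ l T <> 0) /\
  (forall T, ~ Cc T -> l T = 0).

Definition gelfand_open (Cc : set (V -> V)) (U : set ((V -> V) -> C)) : Prop :=
  U `<=` character Cc /\
  forall l, U l -> exists (n : nat) (a : 'I_n -> (V -> V)) (e : C),
    (forall i, Cc (a i)) /\ 0 < e /\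
    forall m, character Cc m -> (forall i, `|m (a i) - l (a i)| < e) -> U m.

Definition restr (D : set (V -> V)) (l : (V -> V) -> C) : (V -> V) -> C :=
  fun T => if `[< D T >] then l T else 0.

Definition point := (set (V -> V) * ((V -> V) -> C))%type.

Definition Sigma (A : set (V -> V)) : set point :=
  [set p | VA A p.1 /\ character p.1 p.2].

Definition fiber (U : set point) (Cc : set (V -> V)) : set ((V -> V) -> C) :=
  [set l | U (Cc, l)].

Definition Sigma_open (A : set (V -> V)) (U : set point) : Prop :=
  U `<=` Sigma A /\
  (forall Cc, VA A Cc -> gelfand_open Cc (fiber U Cc)) /\
  (forall Cc l D, U (Cc, l) -> VA A D -> D `<=` Cc -> U (D, restr D l)).

Definition Sigma_closed (A : set (V -> V)) (F : set point) : Prop :=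
  F `<=` Sigma A /\ Sigma_open A (Sigma A `\` F).

Definition Sigma_closure (A : set (V -> V)) (S : set point) : set point :=
  [set p | Sigma A p /\ forall F, Sigma_closed A F -> S `<=` F -> F p].

Definition irreducible_closed (A : set (V -> V)) (F : set point) : Prop :=
  Sigma_closed A F /\ F !=set0 /\
  forall F1 F2, Sigma_closed A F1 -> Sigma_closed A F2 ->
    F `<=` F1 `|` F2 -> F `<=` F1 \/ F `<=` F2.

Definition Sigma_sober (A : set (V -> V)) : Prop :=
  forall F, irreducible_closed A F ->
    exists! p, Sigma A p /\ F = Sigma_closure A [set p].

Definition VA_dcc (A : set (V -> V)) : Prop :=
  forall c : nat -> set (V -> V), (forall n, VA A (c n)) ->
    (forall n, c n.+1 `<=` c n) -> exists N, forall n, (N <= n)%N -> c n = c N.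

Definition finite_dimensional (A : set (V -> V)) : Prop :=
  exists (n : nat) (b : 'I_n -> (V -> V)), (forall i, A (b i)) /\
    forall T, A T -> exists k : 'I_n -> C, T = (fun x => \sum_(i < n) k i *: b i x).

End VNA.

From Pilot Require Import Defs.
From mathcomp Require Import all_boot all_algebra complex.
From mathcomp Require Import boolp classical_sets reals.
From mathcomp Require Import order.
Import Order.TTheory GRing.Theory Num.Theory.

(* Closed subsets of Sigma^* are upward closed for the order in which (C, l)
   lies below (C', l') iff C is contained in C' and l'|_C = l, and the closure
   of a point is the set of points above it.  Given an irreducible closed F,
   the minimal condition on V(A) yields a point (C0, l0) of F with C0 minimal
   among the contexts of points of F.  The sets of points (D, m) with D in C0
   and m in a fixed open O when D = C0 are open; as Sigma_C0 is Hausdorff,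
   irreducibility forces l0 to be the only point of F over C0, and then F to
   be the set of points above (C0, l0).  A finite-dimensional A satisfies the
   minimal condition because a proper inclusion of subalgebras increases the
   maximal length of a linearly independent family. *)

Set Implicit Arguments. Unset Strict Implicit. Unset Printing Implicit Defensive.

Local Open Scope ring_scope.
Local Open Scope classical_set_scope.

Section Sobriety.
Variable R : realType.
Local Notation C := R[i].
Variable V : lmodType C.
Variable ip : V -> V -> C.
Variable A : set (V -> V).

Section ContextFacts.
Variable D : set (V -> V).
Hypothesis VD : VA ip A D.

Lemma VA_id : D id.
Proof. by case: VD => -[_ [Did _]] _. Qed.

Lemma VA_lin (a : C) T S : D T -> D S -> D (fun x => a *: T x + S x).
Proof. by case: VD => -[_ [_ [Dlin _]]] _; exact: Dlin. Qed.

Lemma VA_comp T S : D T -> D S -> D (T \o S).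
Proof. by case: VD => -[_ [_ [_ [Dcomp _]]]] _; exact: Dcomp. Qed.

Lemma VA_sub : D `<=` A.
Proof. by case: VD => _ []. Qed.

Lemma VA_zero : D (fun _ => 0).
Proof.
have -> : (fun _ => 0) = (fun x : V => (-1) *: id x + id x).
  by apply: funext => x; rewrite scaleN1r addNr.
by apply: VA_lin; exact: VA_id.
Qed.

Lemma VA_lincomb k (b : 'I_k -> C) (f : nat -> V -> V) :
  (forall i : 'I_k, D (f i)) -> D (fun x => \sum_(i < k) b i *: f i x).
Proof.
elim: k b => [|k IHk] b Df.
  by under [X in D X]funext => x do rewrite big_ord0; exact: VA_zero.
under [X in D X]funext => x do rewrite big_ord_recr /= addrC.
apply: VA_lin; first exact: (Df ord_max).
exact: IHk (fun i => Df (widen_ord (leqnSn k) i)).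
Qed.

Lemma character_id l : character D l -> l id = 1.
Proof.
case=> _ [lM [[T [DT /eqP lT_neq0]] _]].
by apply: (mulIf lT_neq0); rewrite mul1r -lM //; exact: VA_id.
Qed.

End ContextFacts.

Lemma character_out (D : set (V -> V)) l T : character D l -> ~ D T -> l T = 0.
Proof. by case=> _ [_ [_]]; apply. Qed.

Lemma restr_in (D : set (V -> V)) l T : D T -> restr D l T = l T.
Proof. by move=> DT; rewrite /restr asboolT. Qed.

Lemma restr_out (D : set (V -> V)) l T : ~ D T -> restr D l T = 0.
Proof. by move=> nDT; rewrite /restr asboolF. Qed.

Lemma restr_restr (D1 D2 : set (V -> V)) l :
  D1 `<=` D2 -> restr D1 (restr D2 l) = restr D1 l.
Proof.
move=> D12; apply: funext => T; have [D1T|nD1T] := pselect (D1 T).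
  by rewrite !restr_in //; exact: D12.
by rewrite !restr_out.
Qed.

Lemma restr_character (D : set (V -> V)) l : character D l -> restr D l = l.
Proof.
move=> chl; apply: funext => T; have [DT|nDT] := pselect (D T).
  by rewrite restr_in.
by rewrite restr_out // (character_out chl).
Qed.

Lemma character_restr (D Cc : set (V -> V)) l : VA ip A Cc -> VA ip A D ->
  D `<=` Cc -> character Cc l -> character D (restr D l).
Proof.
move=> VCc VD DCc chl; have [lL [lM _]] := chl.
split; [|split; [|split]].
- move=> a T S DT DS; rewrite !restr_in //; last exact: VA_lin.
  by apply: lL; exact: DCc.
- move=> T S DT DS; rewrite !restr_in //; last exact: VA_comp.
  by apply: lM; exact: DCc.
- exists id; split; first exact: VA_id VD.
  rewrite restr_in; last exact: VA_id VD.
  by rewrite (character_id VCc chl); apply/eqP; exact: oner_neq0.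
- by move=> T nDT; rewrite restr_out.
Qed.

Definition gelfand_nbhs (Cc : set (V -> V)) (U : set ((V -> V) -> C)) l :=
  exists (n : nat) (a : 'I_n -> (V -> V)) (e : C),
    (forall i, Cc (a i)) /\ 0 < e /\
    forall m, character Cc m -> (forall i, `|m (a i) - l (a i)| < e) -> U m.

Definition gelfand_ball (Cc : set (V -> V)) T l (r : C) : set ((V -> V) -> C) :=
  [set m | character Cc m /\ `|m T - l T| < r].

Lemma gelfand_nbhs_full (Cc : set (V -> V)) U l :
  character Cc `<=` U -> gelfand_nbhs Cc U l.
Proof.
move=> chU; exists 0%N, (fun _ => id), 1.
by split; [case | split; [exact: ltr01 | move=> m /chU]].
Qed.

Lemma gelfand_nbhs_ball (Cc : set (V -> V)) U T l r : Cc T -> 0 < r ->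
  gelfand_ball Cc T l r `<=` U -> gelfand_nbhs Cc U l.
Proof.
move=> CcT r_gt0 ballU; exists 1%N, (fun _ => T), r.
by split=> //; split=> // m chm /(_ ord0) ?; exact: ballU.
Qed.

Lemma gelfand_open_character (Cc : set (V -> V)) : gelfand_open Cc (character Cc).
Proof. by split=> // l _; exact: gelfand_nbhs_full. Qed.

Lemma gelfand_open_ball (Cc : set (V -> V)) T l r :
  Cc T -> gelfand_open Cc (gelfand_ball Cc T l r).
Proof.
move=> CcT; split=> [m []//|m [chm lt_mr]].
apply: (gelfand_nbhs_ball CcT (r := r - `|m T - l T|)); first by rewrite subr_gt0.
move=> m' [chm' lt_m'm]; split=> //.
apply: le_lt_trans (ler_distD (m T) _ _) _.
by rewrite -(subrK `|m T - l T| r) ltrD2r.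
Qed.

Definition above (p : Defs.point V) : set (Defs.point V) :=
  [set q | Sigma ip A q /\ p.1 `<=` q.1 /\ restr p.1 q.2 = p.2].

Definition lower_set (C0 : set (V -> V)) (O : set ((V -> V) -> C)) :
  set (Defs.point V) :=
  [set q | Sigma ip A q /\ q.1 `<=` C0 /\ (q.1 = C0 -> O q.2)].

Lemma above_refl p : Sigma ip A p -> above p p.
Proof. by case: p => D l [VD chl]; do 2?split=> //; exact: restr_character. Qed.

Lemma above_antisym p q : above p q -> above q p -> p = q.
Proof.
case: p q => [D1 l1] [D2 l2] [[_ chl2] [/= D12 <-]] [_ [/= D21 _]].
have eD : D1 = D2 by apply/seteqP; split.
by rewrite -eD in chl2 *; rewrite restr_character.
Qed.

Lemma Sigma_open_compl_above p :
  Sigma ip A p -> Sigma_open ip A (Sigma ip A `\` above p).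
Proof.
case: p => C0 l0 [VC0 chl0]; rewrite /= in VC0 chl0.
split; first by move=> q [].
split=> [Cc VCc|Cc l D [[VCc chl] nabove] VD DCc].
- split=> [l [[_ chl] _] //|l [[_ chl] nabove]].
  have [C0Cc|nC0Cc] := pselect (C0 `<=` Cc); last first.
    by apply: gelfand_nbhs_full => m chm; split=> //; case=> _ [].
  have [T neT] : exists T, restr C0 l T <> l0 T.
    apply/existsNP => eql; apply: nabove; do 2?split=> //; exact: funext.
  have C0T : C0 T.
    by apply: contrapT => nC0T; apply: neT; rewrite restr_out // (character_out chl0).
  rewrite restr_in // in neT.
  apply: (gelfand_nbhs_ball (C0Cc _ C0T) (r := `|l T - l0 T|)).
    by rewrite normr_gt0 subr_eq0; apply/eqP.
  move=> m [chm lt_ml]; split=> //; case=> _ [_ /(congr1 (fun f => f T))] /=.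
  by rewrite restr_in // => mT; move: lt_ml; rewrite mT distrC ltxx.
- split; first by split=> //=; exact: (character_restr VCc VD DCc chl).
  case=> /= _ [C0D eql0]; apply: nabove; split=> //; split=> /=.
    exact: subset_trans C0D DCc.
  by rewrite -(restr_restr l C0D).
Qed.

Lemma Sigma_closed_compl W : Sigma_open ip A W -> Sigma_closed ip A (Sigma ip A `\` W).
Proof.
move=> oW; split; first by move=> q [].
by rewrite setDD setIidr //; exact: oW.1.
Qed.

Lemma Sigma_closed_above p : Sigma ip A p -> Sigma_closed ip A (above p).
Proof.
move=> Sp; have := Sigma_closed_compl (Sigma_open_compl_above Sp).
by rewrite setDD setIidr // => q [].
Qed.

Lemma Sigma_closed_upward F p q :
  Sigma_closed ip A F -> F p -> above p q -> F q.
Proof.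
case: p q => [D1 l1] [D2 l2] [FS [_ [_ Fc_down]]] Fp [Sq [/= D12 eql1]].
rewrite -eql1 in Fp; apply: contrapT => nFq.
by have [] := Fc_down D2 l2 D1 (conj Sq nFq) (FS _ Fp).1 D12.
Qed.

Lemma Sigma_closure_set1 p : Sigma ip A p -> Sigma_closure ip A [set p] = above p.
Proof.
move=> Sp; apply/seteqP; split=> [q [_ q_cl]|q q_above].
  by apply: q_cl; [exact: Sigma_closed_above | move=> _ ->; exact: above_refl].
split; first by case: q_above.
by move=> F cF pF; apply: Sigma_closed_upward q_above => //; exact: pF.
Qed.

Lemma Sigma_open_lower_set C0 O :
  VA ip A C0 -> gelfand_open C0 O -> Sigma_open ip A (lower_set C0 O).
Proof.
move=> VC0 [_ O_nbhs]; split; first by move=> q [].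
split=> [Cc VCc|Cc l D [[VCc chl] [CcC0 Ol]] VD DCc].
- split=> [l [[]]//|l [[_ chl] [CcC0 Ol]]].
  have [eCc|neCc] := pselect (Cc = C0); last first.
    by apply: gelfand_nbhs_full => m chm; split; [by split | split=> // /neCc].
  rewrite eCc in chl Ol *; have [n [a [e [C0a [e_gt0 lO]]]]] := O_nbhs l (Ol erefl).
  exists n, a, e; do 2?split=> //.
  by move=> m chm lm; split; [by split | split=> // _; exact: lO].
- split; first by split=> //=; exact: (character_restr VCc VD DCc chl).
  split=> /=; first exact: subset_trans DCc CcC0.
  move=> eD; have eCc : Cc = C0 by apply/seteqP; split=> //; rewrite -eD.
  by rewrite eD -eCc restr_character //; apply: Ol.
Qed.

Lemma irreducible_meet F W1 W2 : irreducible_closed ip A F ->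
  Sigma_open ip A W1 -> Sigma_open ip A W2 ->
  (exists2 p, F p & W1 p) -> (exists2 p, F p & W2 p) ->
  exists p, [/\ F p, W1 p & W2 p].
Proof.
move=> [[FS _] [_ F_irr]] oW1 oW2 [p1 Fp1 W1p1] [p2 Fp2 W2p2].
apply: contrapT => nmeet.
have cover : F `<=` (Sigma ip A `\` W1) `|` (Sigma ip A `\` W2).
  move=> q Fq; have Sq := FS _ Fq.
  have [W1q|] := pselect (W1 q); last by left.
  by right; split=> // W2q; apply: nmeet; exists q.
have [/(_ _ Fp1)|/(_ _ Fp2)] :=
  F_irr _ _ (Sigma_closed_compl oW1) (Sigma_closed_compl oW2) cover; by case.
Qed.

Section MinimalContext.
Variable F : set (Defs.point V).
Hypothesis F_irr : irreducible_closed ip A F.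
Variable C0 : set (V -> V).
Hypothesis C0_min : forall q, F q -> q.1 `<=` C0 -> q.1 = C0.

Lemma irreducible_fiber_uniq l l0 : F (C0, l) -> F (C0, l0) -> l = l0.
Proof.
move=> Fl Fl0; have FS := F_irr.1.1.
have [VC0 chl] : VA ip A C0 /\ character C0 l := FS _ Fl.
have chl0 : character C0 l0 := (FS _ Fl0).2.
apply: funext => T; apply: contrapT => neT.
have C0T : C0 T.
  by apply: contrapT => nC0T; apply: neT; rewrite (character_out chl) ?(character_out chl0).
pose r := `|l T - l0 T| / 2.
have r_gt0 : 0 < r by rewrite divr_gt0 // normr_gt0 subr_eq0; apply/eqP.
pose W l' := lower_set C0 (gelfand_ball C0 T l' r).
have W_self l' : F (C0, l') -> W l' (C0, l').
  move=> Fl'; split; first exact: FS.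
  by split=> // _; split; [exact: (FS _ Fl').2 | rewrite subrr normr0].
have [[D m] [Fm [_ [DC0 ml]] [_ [_ ml0]]]] := irreducible_meet F_irr
  (Sigma_open_lower_set VC0 (gelfand_open_ball l r C0T))
  (Sigma_open_lower_set VC0 (gelfand_open_ball l0 r C0T))
  (ex_intro2 _ _ _ Fl (W_self _ Fl)) (ex_intro2 _ _ _ Fl0 (W_self _ Fl0)).
have eD := C0_min Fm DC0; have [_ lt_ml] := ml eD; have [_ lt_ml0] := ml0 eD.
have : `|l T - l0 T| < r + r.
  by apply: le_lt_trans (ler_distD (m T) _ _) _; rewrite distrC ltrD.
by rewrite -splitr ltxx.
Qed.

Lemma irreducible_above l0 : F (C0, l0) -> F = above (C0, l0).
Proof.
move=> Fl0; have FS := F_irr.1.1; have S0 := FS _ Fl0.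
apply/seteqP; split=> q; last exact: Sigma_closed_upward F_irr.1 Fl0.
move=> Fq; apply: contrapT => nabove.
have [[D l] [Fl [_ nabove_l] [_ [DC0 _]]]] := irreducible_meet F_irr
  (Sigma_open_compl_above S0) (Sigma_open_lower_set S0.1 (gelfand_open_character C0))
  (ex_intro2 _ _ _ Fq (conj (FS _ Fq) nabove))
  (ex_intro2 _ _ _ Fl0 (conj S0 (conj (@subset_refl _ C0) (fun _ => S0.2)))).
have /= eD := C0_min Fl DC0; rewrite eD in Fl nabove_l.
by apply: nabove_l; rewrite (irreducible_fiber_uniq Fl Fl0); exact: above_refl.
Qed.

End MinimalContext.

Definition VA_mincond := forall S : set (set (V -> V)), S `<=` VA ip A -> S !=set0 ->
  exists2 C0, S C0 & forall D, S D -> D `<=` C0 -> D = C0.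

Lemma Sigma_sober_mincond : VA_mincond -> Sigma_sober ip A.
Proof.
move=> mincond F F_irr; have [[FS _] [[[D l] Fl] _]] := F_irr.
have [C0 [_ [l0 Fl0]] C0_min] :=
  mincond [set D | VA ip A D /\ exists l, F (D, l)] (fun _ => @proj1 _ _)
    (ex_intro _ D (conj (FS _ Fl).1 (ex_intro _ l Fl))).
have F_min : forall q, F q -> q.1 `<=` C0 -> q.1 = C0.
  by move=> [D' l'] Fq; apply: C0_min; split; [exact: (FS _ Fq).1 | exists l'].
have F_above := irreducible_above F_irr F_min Fl0.
have S0 := FS _ Fl0.
exists (C0, l0); split=> [|q [Sq]]; first by rewrite Sigma_closure_set1.
rewrite Sigma_closure_set1 // F_above => eq_above.
apply: above_antisym; first by rewrite eq_above; exact: above_refl.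
by rewrite -eq_above; exact: above_refl.
Qed.

Lemma VA_mincond_dcc : VA_dcc ip A -> VA_mincond.
Proof.
move=> dcc S SV [C1 SC1]; apply: contrapT => nmin.
have smaller Cc : exists D, S Cc -> [/\ S D, D `<=` Cc & D <> Cc].
  have [SCc|] := pselect (S Cc); last by exists Cc.
  apply: contrapT => nD; apply: nmin; exists Cc => // D SD DCc.
  by apply: contrapT => neD; apply: nD; exists D.
have [f f_smaller] := choice smaller.
pose c n := iter n f C1.
have Sc n : S (c n) by elim: n => [|n IHn] //=; have [] := f_smaller _ IHn.
have c_desc n : c n.+1 `<=` c n by have [] := f_smaller _ (Sc n).
have [N c_stable] := dcc c (fun n => SV _ (Sc n)) c_desc.
by have [_ _] := f_smaller _ (Sc N); apply; exact: c_stable N.+1 (leqnSn N).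
Qed.

(* Families are indexed by nat (only the first k members matter), so that a family
   of length k extends to length k.+1 by choosing its value at k. *)
Definition lin_indep (D : set (V -> V)) k (f : nat -> V -> V) :=
  (forall i : 'I_k, D (f i)) /\
  forall b : 'I_k -> C, (fun x => \sum_(i < k) b i *: f i x) = (fun _ => 0) ->
    forall i, b i = 0.

Definition lin_rank (D : set (V -> V)) k :=
  (exists f, lin_indep D k f) /\ forall j g, lin_indep D j g -> (j <= k)%N.

Lemma lin_indep_extend (D Cc : set (V -> V)) k f T : VA ip A D -> lin_indep D k f ->
  D `<=` Cc -> Cc T -> ~ D T -> lin_indep Cc k.+1 (fun i => if i == k then T else f i).
Proof.
move=> VD [Df f_indep] DCc CcT nDT; split=> [i|b sum0 i] /=.
  case: ifP => // /negbT neik.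
  have ltik : (i < k)%N by rewrite ltn_neqAle neik -ltnS ltn_ord.
  exact: DCc (Df (Ordinal ltik)).
pose b' (i : 'I_k) := b (widen_ord (leqnSn k) i).
have sum0_at x : b ord_max *: T x + \sum_(i < k) b' i *: f i x = 0.
  have := congr1 (fun g => g x) sum0; rewrite /= big_ord_recr /= eqxx addrC.
  by under eq_bigr => j _ do rewrite (ltn_eqF (ltn_ord j)).
have bk0 : b ord_max = 0.
  apply: contrapT => /eqP bk_neq0; apply: nDT.
  have -> : T = (fun x => \sum_(i < k) (- (b ord_max)^-1 * b' i) *: f i x).
    apply: funext => x; move/eqP: (sum0_at x); rewrite addr_eq0 => /eqP eTx.
    under eq_bigr => j _ do rewrite -scalerA.
    by rewrite -scaler_sumr scaleNr -scalerN -eTx scalerA mulVf // scale1r.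
  exact: (VA_lincomb VD (fun i => - (b ord_max)^-1 * b' i) Df).
have b'0 : forall i, b' i = 0.
  by apply: f_indep; apply: funext => x; have := sum0_at x; rewrite bk0 scale0r add0r.
have [ltik|leki] := ltnP i k.
  by have := b'0 (Ordinal ltik); rewrite /b' (_ : widen_ord _ _ = i) //; exact: val_inj.
by have -> : i = ord_max by apply/val_inj/eqP; rewrite /= eqn_leq leq_ord.
Qed.

Lemma lin_indep_span_le (D : set (V -> V)) k f n (b : 'I_n -> V -> V)
    (K : 'M[C]_(k, n)) :
  lin_indep D k f -> (forall (j : 'I_k) x, f j x = \sum_(l < n) K j l *: b l x) ->
  (k <= n)%N.
Proof.
move=> [_ f_indep] fK; suff /eqP <- : row_free K by exact: rank_leq_col.
apply: inj_row_free => v vK0; apply/rowP => j; rewrite mxE.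
suff sum0 : (fun x => \sum_(j < k) v 0 j *: f j x) = (fun _ => 0).
  exact: f_indep sum0 j.
apply: funext => x; under eq_bigr => i _ do rewrite fK scaler_sumr.
rewrite exchange_big /=; apply: big1 => l _.
under eq_bigr => i _ do rewrite scalerA.
have : (v *m K) 0 l = 0 by rewrite vK0 mxE.
by rewrite mxE -scaler_suml => ->; rewrite scale0r.
Qed.

Lemma lin_indep_bound : finite_dimensional A ->
  exists n, forall D k f, D `<=` A -> lin_indep D k f -> (k <= n)%N.
Proof.
move=> [n [b [_ b_span]]]; exists n => D k f DA f_indep.
have [coord coordP] : {coord : (V -> V) -> 'I_n -> C &
    forall T, A T -> T = (fun x => \sum_(i < n) coord T i *: b i x)}.
  apply: (choice (P := fun T (c : 'I_n -> C) =>
    A T -> T = (fun x => \sum_(i < n) c i *: b i x))) => T.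
  have [AT|nAT] := pselect (A T); last by exists (fun _ => 0).
  by have [c eT] := b_span T AT; exists c.
apply: (lin_indep_span_le (K := \matrix_(j, l) coord (f j) l) f_indep) => j x.
rewrite {1}(coordP _ (DA _ (f_indep.1 j))).
by apply: eq_bigr => l _; rewrite mxE.
Qed.

Lemma lin_rank_exists (D : set (V -> V)) n :
  (forall k f, lin_indep D k f -> (k <= n)%N) -> exists k, lin_rank D k.
Proof.
move=> bound.
have ex0 : exists k, `[< exists f, lin_indep D k f >].
  by exists 0%N; apply/asboolP; exists (fun _ _ => 0); split=> [[]|b _ []].
have ub k : `[< exists f, lin_indep D k f >] -> (k <= n)%N.
  by move=> /asboolP [f /bound].
case: (ex_maxnP ex0 ub) => k /asboolP Dk k_max; exists k; split=> // j g g_indep.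
by apply: k_max; apply/asboolP; exists g.
Qed.

Lemma lin_rank_proper (D Cc : set (V -> V)) k k' : VA ip A D -> D `<=` Cc -> D <> Cc ->
  lin_rank D k -> lin_rank Cc k' -> (k < k')%N.
Proof.
move=> VD DCc neD [[f f_indep] _] [_ Cc_max].
have [T [CcT nDT]] : exists T, Cc T /\ ~ D T.
  apply: contrapT => nT; apply: neD; apply/seteqP; split=> // T CcT.
  by apply: contrapT => nDT; apply: nT; exists T.
exact: Cc_max _ _ (lin_indep_extend VD f_indep DCc CcT nDT).
Qed.

Lemma VA_mincond_fd : finite_dimensional A -> VA_mincond.
Proof.
move=> /lin_indep_bound [n bound] S SV [C1 SC1].
have rank D : S D -> exists k, lin_rank D k.
  by move=> SD; apply: lin_rank_exists => k f; apply: bound; exact: VA_sub (SV _ SD).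
have [k rank1] := rank C1 SC1.
elim/ltn_ind: k C1 SC1 rank1 => k IHk C1 SC1 rank1.
have [[D SD [DC1 neD]]|nD] := pselect (exists2 D, S D & D `<=` C1 /\ D <> C1).
  have [k' rankD] := rank D SD.
  exact: IHk k' (lin_rank_proper (SV _ SD) DC1 neD rankD rank1) D SD rankD.
exists C1 => // D SD DC1; apply: contrapT => neD.
by apply: nD; exists D.
Qed.

End Sobriety.

Theorem proposition2p27 (R : realType) (V : lmodType R[i]) (ip : V -> V -> R[i])
  (A : set (V -> V)) :
  is_hilbert ip -> von_neumann_algebra ip A ->
  (VA_dcc ip A -> Sigma_sober ip A) /\
  (finite_dimensional A -> Sigma_sober ip A).
Proof.
move=> _ _; split=> [dcc|fd]; apply: Sigma_sober_mincond.
- exact: VA_mincond_dcc.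
- exact: VA_mincond_fd.
Qed.
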